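(* Let $q\ge2$, $G\in\mathbb G^q$ and $S=\Psi(G)$. Let $w$ be a white vertex of $S$ and suppose some edge $e$ incident to $w$ is a bridge of $S$ such that the connected component of $S\setminus e$ not containing $w$ is a tree. Then $w$ is admissible.
   Context: Fix an integer $q\ge 2$. A $(q+1)$-edge-colored graph (colored graph) is a finite connected graph, multiple edges allowed and no loops, whose edges carry colors in $\{0,1,\dots,q\}$ such that every vertex is incident to exactly one edge of each color. It is rooted if one color-0 edge is distinguished and oriented; it is bipartite if its vertices can be colored black and white so that every edge joins a black and a white vertex, with the convention that the origin of the root edge is black. $\mathbb G^q$ denotes the set of rooted bipartite colored graphs. Constellations: given $G\in\mathbb G^q$, its constellation $S=\Psi(G)$ is obtained as follows: orient every edge from its black to its white endpoint; contract every color-0 edge into a single vertex, called a white vertex of $S$ (the one coming from the root edge is the root vertex). For each $i\in\{1,\dots,q\}$ the color-$i$ edges now form directed cycles; for each such cycle, passing through white vertices $w_1,\dots,w_p$ in this cyclic order, add a new vertex of color $i$ joined by one color-$i$ edge to each $w_k$, equip the new vertex with the cyclic order $(w_1,\dots,w_p)$ of its incident edges, and delete the original color-$i$ edges of the cycle. $\Psi$ is a bijection from $\mathbb G^q$ onto the set of resulting objects ($q$-constellations). A white vertex $w$ of $S=\Psi(G)$ is admissible if the two endpoints of the color-0 edge of $G$ contracted to $w$ are joined in $G$ by a path containing no color-0 edge. *)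

From mathcomp Require Import all_boot.
Set Implicit Arguments. Unset Strict Implicit. Unset Printing Implicit Defensive.

Section SimpleGraph.
Variable T : finType.

Definition remove_edge (r : rel T) (a b : T) : rel T :=
  fun x y => r x y && ~~ (((x == a) && (y == b)) || ((x == b) && (y == a))).

(* {a,b} is a bridge: an edge whose deletion disconnects its endpoints,
   i.e. increases the number of connected components *)
Definition is_bridge (r : rel T) (a b : T) : Prop :=
  r a b /\ ~ connect (remove_edge r a b) a b.

Definition induced (r : rel T) (A : {set T}) : rel T :=
  fun x y => [&& r x y, x \in A & y \in A].

Definition has_cycle (r : rel T) : Prop :=
  exists (x : T) (p : seq T),
    [/\ uniq (x :: p), 2 <= size p, path r x p & r (last x p) x].

Definition is_tree (r : rel T) (A : {set T}) : Prop :=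
  [/\ A != set0,
      (forall x y, x \in A -> y \in A -> connect (induced r A) x y)
    & ~ has_cycle (induced r A)].
End SimpleGraph.

(* ---------- (q+1)-edge-colored graphs ----------
   Since every vertex is incident to exactly one edge of each color, a
   colored graph on vertex set V is the same as a family of fixed-point-free
   involutions sigma i (i = 0..q): sigma i v is the other endpoint of the
   color-i edge at v (no loops = fixed-point-free). *)

Definition Grel (q : nat) (V : finType) (sigma : 'I_q.+1 -> V -> V) : rel V :=
  fun x y => [exists i : 'I_q.+1, sigma i x == y].

Definition Grel_nonzero (q : nat) (V : finType) (sigma : 'I_q.+1 -> V -> V) : rel V :=
  fun x y => [exists i : 'I_q.+1, (i != ord0) && (sigma i x == y)].

Definition colored_graph (q : nat) (V : finType) (sigma : 'I_q.+1 -> V -> V) : Prop :=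
  [/\ forall i, involutive (sigma i),
      forall i v, sigma i v != v
    & forall x y, connect (Grel sigma) x y].

(* rooted bipartite colored graph: root is the (black) origin of the
   distinguished color-0 edge {root, sigma 0 root}; black is the
   bipartition (true = black) *)
Definition rooted_bipartite (q : nat) (V : finType) (sigma : 'I_q.+1 -> V -> V)
    (root : V) (black : V -> bool) : Prop :=
  [/\ colored_graph sigma, black root
    & forall i v, black (sigma i v) = ~~ black v].

(* ---------- The constellation S = Psi(G) ----------
   White vertices of S = color-0 edges of G, each indexed by its black
   endpoint u (vertex inl u, u black).  After contracting color-0 edges and
   orienting edges black -> white, the color-i edges (i >= 1) form the
   directed cycles of the permutation phi i = sigma 0 \o sigma i on black
   vertices; the color-i vertex of S for such a cycle is inr (i, C) where C
   is the set of (black indices of) white vertices on the cycle.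
   Elements of the vertex type not of this form are isolated dummies. *)

Definition phi (q : nat) (V : finType) (sigma : 'I_q.+1 -> V -> V) (i : 'I_q.+1) : V -> V :=
  fun v => sigma ord0 (sigma i v).

Definition cyc (q : nat) (V : finType) (sigma : 'I_q.+1 -> V -> V) (i : 'I_q.+1) (u : V)
  : {set V} := [set v | fconnect (phi sigma i) u v].

Definition Svert (q : nat) (V : finType) : finType :=
  (V + ('I_q.+1 * {set V}))%type.

Definition Sadj (q : nat) (V : finType) (sigma : 'I_q.+1 -> V -> V) (black : V -> bool)
  : rel (Svert q V) :=
  fun x y =>
    match x, y with
    | inl u, inr (i, C) => [&& black u, i != ord0 & C == cyc sigma i u]
    | inr (i, C), inl u => [&& black u, i != ord0 & C == cyc sigma i u]
    | _, _ => false
    end.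

(* the white vertex of S indexed by black u is admissible: the endpoints
   u and sigma 0 u of the contracted color-0 edge are joined in G by a path
   using no color-0 edge *)
Definition admissible (q : nat) (V : finType) (sigma : 'I_q.+1 -> V -> V) (u : V) : Prop :=
  connect (Grel_nonzero sigma) u (sigma ord0 u).

From mathcomp Require Import all_boot.
Set Implicit Arguments. Unset Strict Implicit. Unset Printing Implicit Defensive.

(* A white vertex is admissible as soon as, for some color j, all the other
   white vertices on its color-j cycle are: walk once around the cycle, using
   the color-j edges and the color-free paths supplied by admissibility.
   Suppose u is not admissible, and let K be the component of S minus the
   bridge e = {u, z} containing z. Every non-admissible white vertex of K has
   q >= 2 color neighbours in K, and every color vertex of K other than z that
   is adjacent to a non-admissible white vertex has another non-admissible
   white neighbour in K; z itself has one, since u is not admissible. So a walk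
   from z through non-admissible white vertices never has to backtrack and
   never gets stuck before returning to z; it must repeat a vertex and thereby
   closes a cycle in the tree K. *)

Section SimpleGraphFacts.
Variable T : finType.

Lemma remove_edge_sym (r : rel T) a b :
  symmetric r -> symmetric (remove_edge r a b).
Proof.
move=> r_sym x y; rewrite /remove_edge r_sym.
by case: (x == a); case: (x == b); case: (y == a); case: (y == b);
  rewrite ?andbF ?andbT ?orbF.
Qed.

Lemma remove_edge_irr (r : rel T) a b :
  irreflexive r -> irreflexive (remove_edge r a b).
Proof. by move=> r_irr x; rewrite /remove_edge r_irr. Qed.

Lemma induced_sym (r : rel T) A : symmetric r -> symmetric (induced r A).
Proof. by move=> r_sym x y; rewrite /induced r_sym [(x \in A) && _]andbC. Qed.

Lemma induced_irr (r : rel T) A : irreflexive r -> irreflexive (induced r A).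
Proof. by move=> r_irr x; rewrite /induced r_irr. Qed.

Variables (r e : rel T).
Hypotheses (r_sym : symmetric r) (r_irr : irreflexive r) (e_sub : subrel e r).

Lemma nonbacktracking_walk_has_cycle x0 x1 :
  e x0 x1 ->
  (forall x y, e x y -> y != x0 -> exists2 y', y' != x & e y y') ->
  has_cycle r.
Proof.
move=> e01 extend.
suff grow n x y s : #|T| <= n + size s -> e x y -> uniq [:: y, x & s] ->
    path r y (x :: s) -> last x s = x0 -> has_cycle r.
  apply: (grow #|T| x0 x1 [::]) => //=; first by rewrite addn0.
    by rewrite inE andbT; apply: contraTneq (e_sub e01) => ->; rewrite r_irr.
  by rewrite r_sym e_sub.
(* The walk [y, x & s] is stored newest vertex first. *)
elim: n x y s => [|n IH] x y s le_T exy uniq_w path_w last_w.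
  move/card_uniqP: uniq_w => card_w.
  by have := max_card (mem [:: y, x & s]); rewrite card_w /= ltnNge ltnW.
have yx0 : y != x0.
  by apply: contraTneq uniq_w => ->; rewrite /= -last_w mem_last.
have [y' y'x eyy'] := extend x y exy yx0.
have [y'_old | y'_new] := boolP (y' \in x :: s).
  (* [y'] is neither [y] nor [x], so the cycle has at least three vertices. *)
  have y'_s : y' \in s by move: y'_old; rewrite inE (negbTE y'x).
  move: uniq_w path_w; case/splitPr: y'_s => s1 s2.
  rewrite -cat_rcons -!cat_cons cat_uniq cat_path.
  case/andP=> uniq_cyc _ /andP[path_cyc _].
  exists y, (x :: rcons s1 y'); split=> //; first by rewrite /= size_rcons.
  by rewrite /= last_rcons r_sym e_sub.
apply: (IH y y' (x :: s)) => //; first by rewrite addnS -addSn.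
- have y'y : y' != y by apply: contraTneq (e_sub eyy') => ->; rewrite r_irr.
  by rewrite [uniq _]/= inE negb_or y'y y'_new.
- by rewrite /= r_sym e_sub.
Qed.
End SimpleGraphFacts.

Lemma exists_other_color q (hq : 2 <= q) (j : 'I_q.+1) :
  exists2 j' : 'I_q.+1, j' != ord0 & j' != j.
Proof.
have [lt1 lt2] : 1 < q.+1 /\ 2 < q.+1 by split; [apply: ltnW | ].
have ne_val (k l : 'I_q.+1) : val k != val l -> k != l by apply: contraNneq => ->.
have [->|j1] := eqVneq j (inord 1).
  by exists (inord 2); apply: ne_val; rewrite /= !inordK.
by exists (inord 1); [apply: ne_val; rewrite /= inordK | rewrite eq_sym].
Qed.

Section Constellation.
Variables (q : nat) (V : finType) (sigma : 'I_q.+1 -> V -> V) (black : V -> bool).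
Hypotheses (sigma_inv : forall i, involutive (sigma i))
           (black_sigma : forall i v, black (sigma i v) = ~~ black v).

Lemma phi_inj i : injective (phi sigma i).
Proof. by move=> x y /(inv_inj (sigma_inv ord0)) /(inv_inj (sigma_inv i)). Qed.

Lemma eq_cyc i v w : w \in cyc sigma i v -> cyc sigma i w = cyc sigma i v.
Proof.
rewrite inE => vw; apply/setP => x; rewrite !inE.
by rewrite (same_connect (fconnect_sym (@phi_inj i)) vw).
Qed.

Lemma black_cyc i v w : w \in cyc sigma i v -> black w = black v.
Proof.
rewrite inE => /iter_findex <-; elim: (findex _ v w) => //= n IH.
by rewrite /phi !black_sigma negbK.
Qed.

Lemma Sadj_sym : symmetric (Sadj sigma black).
Proof. by case=> [a|[i C]] [b|[j D]]. Qed.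

Lemma Sadj_irr : irreflexive (Sadj sigma black).
Proof. by case=> [a|[i C]]. Qed.

Lemma Grel_nonzero_sym : symmetric (Grel_nonzero sigma).
Proof.
move=> x y; apply/existsP/existsP => -[i /andP[i0 /eqP <-]];
  by exists i; rewrite i0 /= ?sigma_inv.
Qed.

(* Going once around the [j]-cycle of [v]: the color-[j] edge leaves each
   member [x] towards [sigma 0 (phi j x)], and admissibility of the next
   member brings the walk back to it. *)
Lemma admissible_of_cycle j v : j != ord0 ->
  (forall w, w \in cyc sigma j v -> w != v -> admissible sigma w) ->
  admissible sigma v.
Proof.
move=> j0 adm_cyc; rewrite /admissible.
set f := phi sigma j; set E := Grel_nonzero sigma.
have E_csym : connect_sym E by apply: sym_connect_sym; apply: Grel_nonzero_sym.
have step x : E x (sigma ord0 (f x)).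
  by apply/existsP; exists j; rewrite j0 /f /phi sigma_inv eqxx.
have walk m : m < order f v -> connect E v (iter m f v).
  elim: m => [|m IH] lt_m; first exact: connect0.
  apply: connect_trans (IH (ltnW lt_m)) (connect_trans (connect1 (step _)) _).
  rewrite E_csym; apply: adm_cyc; first by rewrite inE fconnect_iter.
  by apply/eqP => fmv; have := findex_iter lt_m; rewrite fmv findex0.
have := walk (order f v).-1; rewrite ltn_predL order_gt0 => /(_ isT) /connect_trans.
apply; apply: connect1.
by have := step (finv f v); rewrite f_finv //; apply: phi_inj.
Qed.

Lemma nonadmissible_cycle_mate j v : j != ord0 -> ~ admissible sigma v ->
  exists w, [/\ w \in cyc sigma j v, w != v & ~ admissible sigma w].
Proof.
move=> j0 nadm_v.
have /existsP[w /and3P[wC wv /negP nadm_w]] :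
    [exists w, [&& w \in cyc sigma j v, w != v
                 & ~~ connect (Grel_nonzero sigma) w (sigma ord0 w)]].
  apply: contraT => /existsPn none; case: nadm_v.
  apply: (admissible_of_cycle j0) => w wC wv.
  by move: (none w); rewrite wC wv /= negbK.
by exists w.
Qed.

Section BridgeComponent.
Variables (u : V) (z : Svert q V).
Hypothesis uz_cut : ~ connect (remove_edge (Sadj sigma black) (inl u) z) (inl u) z.

Local Notation S' := (remove_edge (Sadj sigma black) (inl u) z).
Local Notation K := [set y | connect S' z y].

Definition nonadmissible_vertex (x : Svert q V) : bool :=
  if x is inl v then ~~ connect (Grel_nonzero sigma) v (sigma ord0 v) else true.

Definition nonadmissible_edge : rel (Svert q V) := fun x y =>
  [&& induced S' K x y, nonadmissible_vertex x & nonadmissible_vertex y].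

Lemma nonadmissible_edge_extends (hq : 2 <= q) x y :
  nonadmissible_edge x y -> y != z -> exists2 y', y' != x & nonadmissible_edge y y'.
Proof.
case/and3P=> /and3P[xy _ yK] bad_x bad_y yz.
have extend y' : S' y y' -> nonadmissible_vertex y' -> nonadmissible_edge y y'.
  move=> yy' bad_y'; rewrite /nonadmissible_edge /induced yy' yK bad_y bad_y' !andbT /=.
  by move: yK; rewrite !inE => /connect_trans; apply; apply: connect1.
case: y xy yK bad_y yz extend => [v|[j C]] xy vK bad_v yz extend.
- case: x xy {bad_x} => [//|[jc C']] /andP[/and3P[bv _ _] _].
  have [j' j'0 j'jc] := exists_other_color hq jc.
  exists (inr (j', cyc sigma j' v)); first by apply: contra j'jc => /eqP[->].
  apply: extend => //; rewrite /remove_edge /= bv j'0 eqxx /= andbF orbF.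
  have uK : inl u \notin K.
    rewrite inE; apply/negP.
    by rewrite (sym_connect_sym (remove_edge_sym _ _ Sadj_sym)).
  have vu : inl v != inl u :> Svert q V.
    by apply: contraNneq uK => vu; move: vK; rewrite vu.
  by rewrite (negbTE vu).
- case: x xy bad_x => [v0|[? ?] //] /andP[/and3P[bv0 j0 /eqP defC] _] bad_v0.
  have [w [wC wv0 /negP bad_w]] := nonadmissible_cycle_mate j0 (negP bad_v0).
  exists (inl w); first by apply: contra wv0 => /eqP[->].
  apply: extend => //; rewrite /remove_edge /= (black_cyc wC) bv0 j0 defC (eq_cyc wC).
  by rewrite eqxx -defC (negbTE yz).
Qed.

Lemma nonadmissible_edge_at_bridge :
  Sadj sigma black (inl u) z -> ~ admissible sigma u ->
  exists v, nonadmissible_edge z (inl v).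
Proof.
case ez: z => [//|[i C]] /and3P[bu i0 /eqP defC] nadm_u.
have [v [vC vu /negP nadm_v]] := nonadmissible_cycle_mate i0 nadm_u.
have zv : S' z (inl v).
  rewrite ez /remove_edge /= (black_cyc vC) bu i0 defC (eq_cyc vC) !eqxx /=.
  by apply: contra vu => /eqP[->].
exists v; rewrite /nonadmissible_edge /induced /nonadmissible_vertex nadm_v /= -ez zv.
by rewrite !inE connect0 connect1.
Qed.
End BridgeComponent.
End Constellation.

Theorem mainTheorem5 (q : nat) (hq : 2 <= q) (V : finType)
    (sigma : 'I_q.+1 -> V -> V) (root : V) (black : V -> bool)
    (hG : rooted_bipartite sigma root black)
    (u : V) (hu : black u) (z : Svert q V)
    (hbridge : is_bridge (Sadj sigma black) (inl u) z)
    (htree : is_tree (remove_edge (Sadj sigma black) (inl u) z)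
                     [set y | connect (remove_edge (Sadj sigma black) (inl u) z) z y]) :
  admissible sigma u.
Proof.
case: hG => [[sigma_inv _ _] _ black_sigma].
case: hbridge htree => uz_edge uz_cut [_ _ acyclic].
apply: contraT => /negP nadm_u; case: acyclic.
have [v start] := nonadmissible_edge_at_bridge sigma_inv black_sigma uz_edge nadm_u.
apply: (nonbacktracking_walk_has_cycle _ _ _ start).
- exact/induced_sym/remove_edge_sym/Sadj_sym.
- exact/induced_irr/remove_edge_irr/Sadj_irr.
- by move=> x y /andP[].
- by move=> x y; apply: nonadmissible_edge_extends.
Qed.
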